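(* Let $J'\subseteq J$ be nonempty, $t_o\in[0,T-\sum_{j\in J'}p_j]$, and let $\alpha$, $c_1<\dots<c_m$, $M$ and $B_\alpha$ be as in the context. Let $1\le q<m$, $J_l=\{j\in J'\setminus\{\alpha\}:M(j)\le q\}$, $J_r=\{j\in J':M(j)>q\}$ and $s=t_o+\sum_{j\in J_l}p_j$. If $c_q\le s<c_{q+1}$ and $s\notin B_\alpha$, then there exists a partial potential schedule of $J'$ starting at $t_o$ in which all jobs of $J_l$ are processed before $\alpha$, job $\alpha$ starts at time $s$, and all jobs of $J_r$ are processed after $\alpha$.
   Context: $J$ is a finite set of jobs; job $j$ has processing time $p_j>0$ and weight $w_j>0$; $T=\sum_{j\in J}p_j$. For $J'\subseteq J$ and $t_o\ge0$, a partial schedule of $J'$ starting at $t_o$ is an ordering of $J'$ processed consecutively without idle time from time $t_o$; job $j$ has (absolute) start time $t_j$. For $t\ge 0$, $\varphi_j(t)=\frac{w_j}{p_j(p_j+t)}$. For jobs $i,j$ with $w_ip_j\neq w_jp_i$, $t^*_{ij}=\frac{w_jp_i^2-w_ip_j^2}{w_ip_j-w_jp_i}$ (the unique real $t$ with $\varphi_i(t)=\varphi_j(t)$). Dominance rule: for an interval $I\subseteq[0,\infty)$, the relation ''$i$ dominates $j$ on $I$'' is violated by a (partial) schedule if $j$ is processed before $i$ and both $t_j\in I$ and $t_i-p_j\in I$. The rule contains, for each pair of distinct jobs $i,j$ with $(p_i,w_i)\ne(p_j,w_j)$: (1) if $\varphi_i(t)\ge\varphi_j(t)$ for all $t\ge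 0$, ''$i$ dominates $j$ on $[0,\infty)$''; (2) otherwise, if $\varphi_j(t)\ge\varphi_i(t)$ for all $t\ge0$, ''$j$ dominates $i$ on $[0,\infty)$''; (3) otherwise, labelling the pair so that $\varphi_i(0)>\varphi_j(0)$, $t^*_{ij}>0$ is defined and the rule contains ''$i$ dominates $j$ on $[0,t^*_{ij})$'' and ''$j$ dominates $i$ on $[t^*_{ij},\infty)$''. A partial schedule of $J'$ is a partial potential schedule if it violates no relation of the rule between two jobs of $J'$. Banned set: for $i\in J$, $B_i$ is the union over all $j\in J\setminus\{i\}$ with $\varphi_i(0)>\varphi_j(0)$, $w_ip_j\ne w_jp_i$ and $t^*_{ij}\in(0,T)$ of the intervals $[t^*_{ij},t^*_{ij}+p_j)$. Subproblem data: $t_e=t_o+\sum_{j\in J'}p_j$; $\alpha\in J'$ maximizes $\varphi_i(t_o)$ over $i\in J'$, ties broken in favour of maximum $\varphi_i(t_e)$; for $j\in J'\setminus\{\alpha\}$ with $t^*_{\alpha j}$ defined, $c_{\alpha j}=t^*_{\alpha j}+p_j$; $C=\{c_{\alpha j}: j\in J'\setminus\{\alpha\},\ t^*_{\alpha j}\text{ defined},\ c_{\alpha j}\in(t_o,t_e)\}\cup\{t_o,t_e\}$ with distinct elements $t_o=c_1<\dots<c_m=t_e$; $M(\alpha)=1$, and for $j\neq\alpha$, $M(j)=r$ if $t^*_{\alpha j}$ is defined, $t^*_{\alpha j}\in(t_o,t_e)$ and $c_{\alpha j}=c_r$ for some $r\le m$, and $M(j)=|J'|+1$ otherwise. *)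

From HB Require Import structures.
From mathcomp Require Import all_boot all_order all_algebra.
Set Implicit Arguments. Unset Strict Implicit. Unset Printing Implicit Defensive.
Import Order.TTheory GRing.Theory Num.Theory.
Local Open Scope ring_scope.

Section Defs.
Variables (J : finType) (R : realFieldType) (p w : J -> R).

Definition phi (j : J) (t : R) : R := w j / (p j * (p j + t)).

Definition tstar_defined (i j : J) : bool := w i * p j != w j * p i.
Definition tstar (i j : J) : R :=
  (w j * p i ^+ 2 - w i * p j ^+ 2) / (w i * p j - w j * p i).

Definition phi_ge (i j : J) : Prop := forall t, 0 <= t -> phi j t <= phi i t.

(* For an ordered pair (i, j) the dominance rule contains at most one relation
   "i dominates j on I"; dom_int i j t holds iff the rule contains such a
   relation and t lies in its interval I. *)
Definition dom_int (i j : J) (t : R) : Prop :=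
  i != j /\ (p i, w i) != (p j, w j) /\
  ( (phi_ge i j /\ 0 <= t)
    \/ (~ phi_ge i j /\ ~ phi_ge j i /\
        ( (phi j 0 < phi i 0 /\ 0 <= t /\ t < tstar i j)
          \/ (phi i 0 < phi j 0 /\ tstar j i <= t)))).

Definition Ttot : R := \sum_(j : J) p j.

Definition schedule_of (J' : {set J}) (s : seq J) : Prop := perm_eq s (enum J').

Definition start (t0 : R) (s : seq J) (j : J) : R :=
  t0 + \sum_(x <- take (index j s) s) p x.

Definition violates (t0 : R) (s : seq J) (i j : J) : Prop :=
  (index j s < index i s)%N /\
  dom_int i j (start t0 s j) /\ dom_int i j (start t0 s i - p j).

Definition partial_potential (J' : {set J}) (t0 : R) (s : seq J) : Prop :=
  schedule_of J' s /\
  forall i j, i \in J' -> j \in J' -> ~ violates t0 s i j.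

Definition banned (i : J) (t : R) : Prop :=
  exists j, j != i /\ phi j 0 < phi i 0 /\ tstar_defined i j /\
    0 < tstar i j < Ttot /\ tstar i j <= t < tstar i j + p j.

Definition tend (J' : {set J}) (t0 : R) : R := t0 + \sum_(j in J') p j.

Definition is_alpha (J' : {set J}) (t0 : R) (a : J) : Prop :=
  a \in J' /\
  forall i, i \in J' ->
    phi i t0 <= phi a t0 /\
    (phi i t0 = phi a t0 -> phi i (tend J' t0) <= phi a (tend J' t0)).

Definition cpoints (J' : {set J}) (t0 : R) (a : J) : seq R :=
  sort <=%R (undup ([:: t0; tend J' t0] ++
    map (fun j => tstar a j + p j)
      (filter (fun j => (j != a) && tstar_defined a j &&
                        (t0 < tstar a j + p j < tend J' t0)) (enum J')))).

(* c_r, 1-indexed *)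
Definition cpt (J' : {set J}) (t0 : R) (a : J) (r : nat) : R :=
  nth 0 (cpoints J' t0 a) r.-1.

Definition Mfun (J' : {set J}) (t0 : R) (a : J) (j : J) : nat :=
  if j == a then 1%N
  else if tstar_defined a j && (t0 < tstar a j < tend J' t0) &&
          (tstar a j + p j \in cpoints J' t0 a)
       then (index (tstar a j + p j) (cpoints J' t0 a)).+1
       else #|J'|.+1.

Definition Jleft (J' : {set J}) (t0 : R) (a : J) (q : nat) : {set J} :=
  [set j in J' | (j != a) && (Mfun J' t0 a j <= q)%N].
Definition Jright (J' : {set J}) (t0 : R) (a : J) (q : nat) : {set J} :=
  [set j in J' | (q < Mfun J' t0 a j)%N].

End Defs.

(* Since 1/phi_k(t) = (p_k / w_k) (p_k + t) is affine in t, a relation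
   "i dominates j on I" of the rule can only be violated at times t where the
   line of i lies below that of j just after t.  Scheduling greedily, always
   next a job whose line is lowest just after the current time, therefore
   violates no relation.  Take J_l greedily from t_o, then alpha at s, then
   J_r greedily from s + p_alpha.  Each j in J_l has a flatter line than
   alpha, crossing it at t*_{alpha j} <= s - p_j, so alpha never dominates j
   where a violation would be tested.  Each i in J_r stays above alpha on
   [t_o, s]: otherwise its line crosses alpha's at some T in (t_o, s] with
   s < T + p_i, which puts s in B_alpha.  Past t*_{alpha j} the line of j is
   below alpha's, hence below those of J_r, so no relation between the two
   blocks is violated either. *)

From HB Require Import structures.
From mathcomp Require Import all_boot all_order all_algebra.
From mathcomp Require Import ring lra zify.
Set Implicit Arguments. Unset Strict Implicit. Unset Printing Implicit Defensive.
Import Order.TTheory GRing.Theory Num.Theory.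
Local Open Scope ring_scope.

Lemma exists_minimal (T : eqType) (r : rel T) (s : seq T) :
  irreflexive r -> transitive r -> s != [::] ->
  exists2 m, m \in s & forall y, y \in s -> ~~ r y m.
Proof.
move=> r_irr r_trans; elim: s => [//|x s IHs] _.
have [->|/IHs [m m_s m_min]] := eqVneq s [::].
  by exists x => [|y]; rewrite ?inE // => /eqP ->; rewrite r_irr.
have [r_xm|r_xm] := boolP (r x m).
  exists x => [|y]; first exact: mem_head.
  rewrite inE => /predU1P [->|y_s]; first by rewrite r_irr.
  by apply: contra (m_min y y_s) => r_yx; apply: r_trans r_xm.
exists m => [|y]; first by rewrite inE m_s orbT.
by rewrite inE => /predU1P [->|]; last exact: m_min.
Qed.

Section StartTimes.
Variables (J : finType) (R : realFieldType) (p : J -> R).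

Lemma start_head t m s : start p t (m :: s) m = t.
Proof. by rewrite /start /= eqxx big_nil addr0. Qed.

Lemma start_cons t m s j : j != m -> start p t (m :: s) j = start p (t + p m) s j.
Proof. by move=> jm; rewrite /start /= eq_sym (negbTE jm) big_cons addrA. Qed.

Lemma start_cat_l t (A B : seq J) x : x \in A -> start p t (A ++ B) x = start p t A x.
Proof. by move=> xA; rewrite /start index_cat xA take_cat index_mem xA. Qed.

Lemma start_cat_r t (A B : seq J) x : x \notin A ->
  start p t (A ++ B) x = start p (t + \sum_(y <- A) p y) B x.
Proof.
move=> xA; rewrite /start index_cat (negbTE xA) take_cat ltnNge leq_addr /=.
by rewrite addKn big_cat addrA.
Qed.

Hypothesis p_ge0 : forall j, 0 <= p j.

Lemma start_ge t (s : seq J) x : t <= start p t s x.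
Proof. by rewrite lerDl sumr_ge0. Qed.

Lemma start_add_le t (s : seq J) x : x \in s ->
  start p t s x + p x <= t + \sum_(y <- s) p y.
Proof.
move=> xs; rewrite -{2}(cat_take_drop (index x s).+1 s) big_cat /= -addrA lerD2l.
rewrite (take_nth x) ?index_mem // nth_index // -cats1 big_cat big_seq1 /=.
by rewrite lerDl sumr_ge0.
Qed.

End StartTimes.

Section Priority.
Variables (J : finType) (R : realFieldType) (p w : J -> R).
Hypotheses (p_gt0 : forall j, 0 < p j) (w_gt0 : forall j, 0 < w j).

Let p_ge0 j : 0 <= p j := ltW (p_gt0 j).

Definition ratio (k : J) : R := p k / w k.

(* [iphi k t] is [1 / phi k t]: a line in [t] of slope [ratio k]. *)
Definition iphi (k : J) (t : R) : R := ratio k * (p k + t).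

Lemma ratio_gt0 k : 0 < ratio k.
Proof. by rewrite divr_gt0. Qed.

Lemma iphi_gt0 k t : 0 <= t -> 0 < iphi k t.
Proof. by move=> t_ge0; rewrite mulr_gt0 ?ratio_gt0 // ltr_wpDr. Qed.

Lemma phiE k t : 0 <= t -> phi p w k t = (iphi k t)^-1.
Proof.
move=> t_ge0; have := p_gt0 k; have := w_gt0 k => wk pk.
rewrite /phi /iphi /ratio; field.
by rewrite !gt_eqF // ltr_wpDr.
Qed.

Lemma ler_phi i j t : 0 <= t -> (phi p w j t <= phi p w i t) = (iphi i t <= iphi j t).
Proof. by move=> t_ge0; rewrite !phiE // lef_pV2 // posrE iphi_gt0. Qed.

Lemma ltr_phi i j t : 0 <= t -> (phi p w j t < phi p w i t) = (iphi i t < iphi j t).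
Proof. by move=> t_ge0; rewrite !phiE // ltf_pV2 // posrE iphi_gt0. Qed.

Lemma eqr_phi i j t : 0 <= t -> (phi p w i t == phi p w j t) = (iphi i t == iphi j t).
Proof. by move=> t_ge0; rewrite !phiE // (inj_eq invr_inj). Qed.

Lemma iphi_shift k t u : iphi k t = iphi k u + ratio k * (t - u).
Proof. by rewrite /iphi; ring. Qed.

Lemma iphi_cross i j T t : iphi i T = iphi j T ->
  iphi i t - iphi j t = (ratio i - ratio j) * (t - T).
Proof. by rewrite (iphi_shift i t T) (iphi_shift j t T) => ->; ring. Qed.

Lemma tstar_definedE i j : tstar_defined p w i j = (ratio i != ratio j).
Proof.
rewrite /tstar_defined /ratio eqr_div ?(gt_eqF (w_gt0 _)) //.
by rewrite [p i * _]mulrC [p j * _]mulrC eq_sym.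
Qed.

Lemma iphi_tstar i j : tstar_defined p w i j ->
  iphi i (tstar p w i j) = iphi j (tstar p w i j).
Proof.
rewrite /tstar_defined /iphi /ratio /tstar -subr_eq0 => den_neq0.
have := w_gt0 i; have := w_gt0 j => wj wi.
by field; rewrite den_neq0 !gt_eqF.
Qed.

Lemma job_data_eq i j t : ratio i = ratio j -> iphi i t = iphi j t ->
  (p i, w i) = (p j, w j).
Proof.
rewrite /iphi => ratio_eq; rewrite ratio_eq => /(mulfI (lt0r_neq0 (ratio_gt0 j))).
move/addIr => p_eq; move: ratio_eq; rewrite /ratio p_eq.
by move/(mulfI (lt0r_neq0 (p_gt0 j)))/invr_inj => ->.
Qed.

Lemma phi_ge_of_le i j : iphi i 0 <= iphi j 0 -> ratio i <= ratio j -> phi_ge p w i j.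
Proof.
move=> le0 le_ratio t t_ge0; rewrite ler_phi //.
rewrite (iphi_shift i t 0) (iphi_shift j t 0); nra.
Qed.

(* [prec i j t]: [iphi i < iphi j] just after [t], i.e. at [t] with ties
   broken by the slopes. *)
Definition prec (i j : J) (t : R) : bool :=
  (iphi i t < iphi j t) || (iphi i t == iphi j t) && (ratio i < ratio j).

Lemma prec_irr t : irreflexive (fun i j => prec i j t).
Proof. by move=> i; rewrite /prec !ltxx andbF. Qed.

Lemma prec_trans t : transitive (fun i j => prec i j t).
Proof.
move=> j i k; rewrite /prec.
case/orP=> [lt_ij|/andP [/eqP eq_ij lt_ij]] /orP [lt_jk|/andP [/eqP eq_jk lt_jk]].
- by rewrite (lt_trans lt_ij lt_jk).
- by rewrite -eq_jk lt_ij.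
- by rewrite eq_ij lt_jk.
- by rewrite eq_ij eq_jk eqxx (lt_trans lt_ij lt_jk) orbT.
Qed.

Lemma dom_int_prec i j t : dom_int p w i j t -> prec i j t.
Proof.
rewrite /prec; case=> _ [data_neq [[ge_ij t_ge0] | [not_ge_ij [not_ge_ji dom]]]].
  have le_t : iphi i t <= iphi j t by rewrite -ler_phi ?ge_ij.
  have le_t1 : iphi i (t + 1) <= iphi j (t + 1).
    by rewrite -ler_phi ?ge_ij ?addr_ge0.
  have [lt_t|ge_t] := ltrP (iphi i t) (iphi j t); first by [].
  have {ge_t} eq_t : iphi i t = iphi j t by apply/eqP; rewrite eq_le le_t.
  have := iphi_cross (t + 1) eq_t; rewrite addrAC subrr add0r mulr1 => diff.
  have neq_ratio : ratio i != ratio j.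
    by apply: contra data_neq => /eqP/job_data_eq/(_ eq_t) ->.
  by rewrite eq_t eqxx /= lt_neqAle neq_ratio /=; lra.
case: dom => [[lt0 [t_ge0 lt_tstar]] | [lt0 ge_tstar]]; rewrite ltr_phi // in lt0.
  have lt_ratio : ratio j < ratio i.
    by rewrite ltNge; apply/negP => /(phi_ge_of_le (ltW lt0)).
  have def_ij : tstar_defined p w i j by rewrite tstar_definedE gt_eqF.
  have := iphi_cross t (iphi_tstar def_ij) => diff.
  by apply/orP; left; nra.
have lt_ratio : ratio i < ratio j.
  by rewrite ltNge; apply/negP => /(phi_ge_of_le (ltW lt0)).
have def_ji : tstar_defined p w j i by rewrite tstar_definedE gt_eqF.
have := iphi_cross t (iphi_tstar def_ji) => diff.
have [//|le_t] := ltrP (iphi i t) (iphi j t).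
by rewrite lt_ratio andbT; apply/eqP; nra.
Qed.

Lemma iphi_le_between i j x u y : x <= u <= y ->
  iphi i x <= iphi j x -> iphi i y <= iphi j y -> iphi i u <= iphi j u.
Proof.
move=> /andP [xu uy] le_x le_y.
rewrite (iphi_shift i u x) (iphi_shift j u x).
move: le_y; rewrite (iphi_shift i y x) (iphi_shift j y x).
by have [lt_ratio|le_ratio] := ltrP (ratio i) (ratio j); nra.
Qed.

Lemma iphi_lt_after_cross i j T u : ratio j < ratio i -> iphi i T = iphi j T ->
  T < u -> iphi j u < iphi i u.
Proof. by move=> lt_ratio /(iphi_cross u) diff lt_Tu; nra. Qed.

Lemma prec_after_cross i j T u : ratio j < ratio i -> iphi i T = iphi j T ->
  T <= u -> ~~ prec i j u.
Proof.
move=> lt_ratio /(iphi_cross u) diff le_Tu.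
rewrite /prec negb_or negb_and -!leNgt (ltW lt_ratio) orbT andbT; nra.
Qed.

Lemma exists_greedy_schedule (S : seq J) t : exists2 sch, perm_eq sch S &
  forall i j, i \in sch -> j \in sch -> (index j sch < index i sch)%N ->
    ~~ prec i j (start p t sch j).
Proof.
have [n] := ubnP (size S); elim: n S t => // n IHn S t size_lt.
have [->|S_neq0] := eqVneq S [::]; first by exists [::].
have [m m_S m_min] := exists_minimal (@prec_irr t) (@prec_trans t) S_neq0.
have [|sch' perm_sch' greedy'] := IHn (rem m S) (t + p m).
  by rewrite size_rem // -ltnS prednK // lt0n size_eq0.
have perm_sch : perm_eq (m :: sch') S.
  by rewrite perm_sym (perm_trans (perm_to_rem m_S)) // perm_cons perm_sym.
exists (m :: sch') => // i j i_sch j_sch /=.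
have [<- _|mj] := eqVneq m j; first by rewrite start_head m_min // -(perm_mem perm_sch).
have [<- //|mi] := eqVneq m i.
rewrite ltnS start_cons 1?eq_sym //.
move: i_sch j_sch; rewrite !inE ![_ == m]eq_sym (negbTE mi) (negbTE mj) /=.
exact: greedy'.
Qed.

Definition prec_free (t : R) (s : seq J) : Prop :=
  forall i j, i \in s -> j \in s -> (index j s < index i s)%N ->
    ~~ (prec i j (start p t s j) && prec i j (start p t s i - p j)).

Lemma partial_potential_of_prec_free J' t s :
  schedule_of J' s -> prec_free t s -> partial_potential p w J' t s.
Proof.
move=> sched free; split=> // i j iJ jJ [lt_ji [dom_j dom_i]].
have mem_s x : x \in J' -> x \in s by rewrite (perm_mem sched) mem_enum.
by move: (free i j (mem_s _ iJ) (mem_s _ jJ) lt_ji); rewrite !dom_int_prec.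
Qed.

Lemma prec_free_cat t (A B : seq J) : uniq (A ++ B) ->
  prec_free t A -> prec_free (t + \sum_(y <- A) p y) B ->
  (forall i j, i \in B -> j \in A ->
     ~~ (prec i j (start p t A j) &&
         prec i j (start p (t + \sum_(y <- A) p y) B i - p j))) ->
  prec_free t (A ++ B).
Proof.
rewrite cat_uniq => /and3P [_ disj _] freeA freeB cross i j.
have notA x : x \in B -> x \notin A.
  by move=> xB; apply: contra disj => xA; apply/hasP; exists x.
rewrite !mem_cat => /orP [iA|iB] /orP [jA|jB].
- by rewrite !index_cat iA jA !start_cat_l //; apply: freeA.
- rewrite !index_cat iA (negbTE (notA _ jB)) => lt_ji.
  by have := index_mem i A; rewrite iA; lia.
- by move=> _; rewrite start_cat_l // start_cat_r ?notA //; apply: cross.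
- rewrite !index_cat (negbTE (notA _ iB)) (negbTE (notA _ jB)) ltn_add2l.
  by rewrite !start_cat_r ?notA //; apply: freeB.
Qed.

Lemma iphi_le_of_prec i j t : prec i j t -> iphi i t <= iphi j t.
Proof. by case/orP => [/ltW|/andP [/eqP -> _]]. Qed.

Lemma no_prec_across a i j T t0 s tj ti :
  ratio j < ratio a -> iphi a T = iphi j T -> T + p j <= s ->
  iphi a t0 <= iphi i t0 -> ~~ prec i a s ->
  t0 <= tj -> tj + p j <= s -> s + p a <= ti ->
  ~~ (prec i j tj && prec i j (ti - p j)).
Proof.
move=> lt_ratio cross_T T_le ia_t0 not_prec_s t0_tj tj_le ti_ge.
apply/negP => /andP [/iphi_le_of_prec ij_tj /iphi_le_of_prec ij_ti].
have ia_s : iphi a s <= iphi i s.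
  by move: not_prec_s; rewrite /prec negb_or -leNgt => /andP [].
have := p_gt0 a; have := p_gt0 j => pj pa.
(* At a common time [u] past [T]: iphi i <= iphi j < iphi a <= iphi i. *)
have [u /andP [tj_u_ti t0_u_s] T_u] :
    exists2 u, (tj <= u <= ti - p j) && (t0 <= u <= s) & T < u.
  have [le_ys|lt_sy] := lerP (ti - p j) s; [exists (ti - p j) | exists s];
    try (apply/andP; split; apply/andP; split); lra.
have ij_u := iphi_le_between tj_u_ti ij_tj ij_ti.
have ai_u := iphi_le_between t0_u_s ia_t0 ia_s.
have := iphi_lt_after_cross lt_ratio cross_T T_u; lra.
Qed.

Lemma prec_free_blocks a t0 s (sl sr : seq J) :
  uniq (sl ++ a :: sr) -> t0 + \sum_(y <- sl) p y = s ->
  prec_free t0 sl -> prec_free (s + p a) sr ->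
  (forall j, j \in sl ->
     exists T, [/\ ratio j < ratio a, iphi a T = iphi j T & T + p j <= s]) ->
  (forall i, i \in sr -> iphi a t0 <= iphi i t0 /\ ~~ prec i a s) ->
  prec_free t0 (sl ++ a :: sr).
Proof.
move=> uniq_sch sum_l free_l free_r left_cross right_ok.
have uniq_r : uniq (a :: sr) by move: uniq_sch; rewrite cat_uniq => /and3P [].
have /andP [a_sr _] := uniq_r.
apply: prec_free_cat; rewrite ?sum_l //.
  rewrite -cat1s; apply: prec_free_cat; rewrite ?big_seq1 ?cat1s //.
    by move=> i j; rewrite !inE => /eqP -> /eqP ->; rewrite ltnn.
  move=> i j i_sr; rewrite inE => /eqP ->.
  by rewrite start_head negb_and (proj2 (right_ok i i_sr)).
move=> i j; rewrite inE => /predU1P [->|i_sr] j_sl.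
  have [T [lt_ratio cross_T T_le]] := left_cross j j_sl.
  rewrite start_head negb_and (prec_after_cross (u := s - p j) lt_ratio cross_T) ?orbT //.
  by rewrite lerBrDr.
have [T [lt_ratio cross_T T_le]] := left_cross j j_sl.
have [ia_t0 not_prec_s] := right_ok i i_sr.
have ia : i != a by apply: contraNneq a_sr => <-.
rewrite start_cons //; apply: (no_prec_across (t0 := t0) (s := s) lt_ratio cross_T) => //.
- exact: start_ge.
- by rewrite -sum_l start_add_le.
- exact: start_ge.
Qed.

Lemma exists_block_schedule (J' L Rr : {set J}) a t0 s :
  J' = a |: (L :|: Rr) -> a \notin L :|: Rr -> [disjoint L & Rr] ->
  t0 + \sum_(j in L) p j = s ->
  (forall j, j \in L ->
     exists T, [/\ ratio j < ratio a, iphi a T = iphi j T & T + p j <= s]) ->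
  (forall i, i \in Rr -> iphi a t0 <= iphi i t0 /\ ~~ prec i a s) ->
  exists sch : seq J,
    partial_potential p w J' t0 sch /\
    (forall j, j \in L -> (index j sch < index a sch)%N) /\
    start p t0 sch a = s /\
    (forall j, j \in Rr -> (index a sch < index j sch)%N).
Proof.
move=> J'E a_LR disj_LR sum_L left_cross right_ok.
have prec_free_perm (S : seq J) t : exists2 sch, perm_eq sch S & prec_free t sch.
  have [sch perm_sch greedy] := exists_greedy_schedule S t.
  by exists sch => // i j *; rewrite negb_and greedy.
have [sl perm_l free_l] := prec_free_perm (enum L) t0.
have [sr perm_r free_r] := prec_free_perm (enum Rr) (s + p a).
have mem_l x : (x \in sl) = (x \in L) by rewrite (perm_mem perm_l) mem_enum.
have mem_r x : (x \in sr) = (x \in Rr) by rewrite (perm_mem perm_r) mem_enum.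
have sum_l : t0 + \sum_(y <- sl) p y = s by rewrite (perm_big _ perm_l) big_enum.
have not_l x : x \in Rr -> x \notin sl.
  by move=> xR; rewrite mem_l; apply/negP => /(disjointFr disj_LR); rewrite xR.
move: a_LR; rewrite in_setU negb_or -mem_l -mem_r => /andP [a_sl a_sr].
have uniq_sch : uniq (sl ++ a :: sr).
  rewrite cat_uniq /= a_sr (perm_uniq perm_l) (perm_uniq perm_r) !enum_uniq andbT /=.
  by rewrite andbT negb_or a_sl /=; apply/hasPn => x; rewrite mem_r; apply: not_l.
exists (sl ++ a :: sr); split.
  apply: partial_potential_of_prec_free.
    apply: uniq_perm; rewrite ?enum_uniq // => x.
    by rewrite mem_enum J'E !inE mem_cat inE mem_l mem_r orbCA.
  apply: (prec_free_blocks uniq_sch sum_l free_l free_r) => [j|i]; rewrite ?mem_l ?mem_r.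
    exact: left_cross.
  exact: right_ok.
have index_a : index a (sl ++ a :: sr) = size sl.
  by rewrite index_cat (negbTE a_sl) /= eqxx addn0.
split=> [j jL|]; first by rewrite index_a index_cat mem_l jL index_mem mem_l.
split=> [|j jR]; first by rewrite start_cat_r // sum_l start_head.
have aj : (a == j) = false by apply: contraNF a_sr => /eqP ->; rewrite mem_r.
by rewrite index_a index_cat (negbTE (not_l _ jR)) /= aj addnS ltnS leq_addr.
Qed.

Section Subproblem.
Variables (J' : {set J}) (t0 : R) (a : J).

Local Notation cs := (cpoints p w J' t0 a).
Local Notation te := (tend p J' t0).
Local Notation c := (cpt p w J' t0 a).

Lemma tend_ge : t0 <= te.
Proof. by rewrite lerDl sumr_ge0. Qed.

Lemma cpoints_le_tend x : x \in cs -> x <= te.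
Proof.
rewrite mem_sort mem_undup mem_cat !inE => /orP [/orP [/eqP ->|/eqP ->]|] //.
  exact: tend_ge.
by case/mapP=> j; rewrite mem_filter => /andP [/andP [_ /andP [_ /ltW le_te]] _] ->.
Qed.

Lemma mem_cpoints i : i \in J' -> i != a -> tstar_defined p w a i ->
  t0 < tstar p w a i + p i < te -> tstar p w a i + p i \in cs.
Proof.
move=> iJ ia def_ai range; rewrite mem_sort mem_undup mem_cat; apply/orP; right.
by apply/mapP; exists i; rewrite // mem_filter ia def_ai range mem_enum.
Qed.

Lemma size_cpoints : a \in J' -> (size cs <= #|J'|.+1)%N.
Proof.
move=> aJ; rewrite size_sort (leq_trans (size_undup _)) //.
rewrite size_cat size_map size_filter /=; set P := (fun j => _).
have : (count P (enum J') <= count (predC (pred1 a)) (enum J'))%N.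
  by apply: sub_count => j /andP [/andP [ja _] _].
have := count_predC (pred1 a) (enum J'); rewrite -cardE.
have := count_uniq_mem a (enum_uniq J'); rewrite mem_enum aJ.
lia.
Qed.

Lemma cpt_le r r' : (0 < r')%N -> (r <= r' <= size cs)%N -> c r <= c r'.
Proof.
move=> r'_gt0 /andP [le_rr' le_r'cs].
have sorted_cs : sorted <=%R cs by apply: sort_sorted; apply: le_total.
apply: (sorted_leq_nth le_trans lexx 0 sorted_cs); rewrite ?inE;
  try apply: leq_trans le_r'cs; lia.
Qed.

Variable q : nat.
Hypothesis q_gt0 : (0 < q)%N.
Local Notation Jl := (Jleft p w J' t0 a q).
Local Notation Jr := (Jright p w J' t0 a q).
Local Notation s := (t0 + \sum_(j in Jl) p j).

Lemma Jleft_Jright_partition : a \in J' ->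
  [/\ J' = a |: (Jl :|: Jr), a \notin Jl :|: Jr & [disjoint Jl & Jr]].
Proof.
move=> aJ; split.
- apply/setP => x; rewrite !inE; have [->|xa] := eqVneq x a; first by rewrite aJ.
  by case: leqP; rewrite ?andbT ?andbF ?orbF.
- by rewrite !inE /Mfun eqxx /= ltnNge q_gt0 andbF.
- apply/pred0P => x /=; rewrite !inE.
  by case: leqP; rewrite ?andbF ?andbT.
Qed.

Hypotheses (t0_ge0 : 0 <= t0) (alpha : is_alpha p w J' t0 a).

Lemma alpha_iphi_le k : k \in J' -> iphi a t0 <= iphi k t0.
Proof. by move=> kJ; rewrite -ler_phi //; case: (alpha.2 k kJ). Qed.

Lemma alpha_tie_break k : k \in J' -> iphi k t0 = iphi a t0 -> iphi a te <= iphi k te.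
Proof.
move=> kJ eq_t0; rewrite -ler_phi ?(le_trans t0_ge0 tend_ge) //.
by case: (alpha.2 k kJ) => _; apply; apply/eqP; rewrite eqr_phi // eq_t0.
Qed.

Lemma prec_alpha_crossing i u : i \in J' -> t0 <= u -> u < te -> prec i a u ->
  [/\ ratio i < ratio a, tstar_defined p w a i & t0 < tstar p w a i <= u].
Proof.
move=> iJ t0_u u_te prec_u; have ai_t0 := alpha_iphi_le iJ.
have lt_ratio : ratio i < ratio a.
  move: prec_u; rewrite /prec (iphi_shift i u t0) (iphi_shift a u t0).
  by case/orP => [lt_u|/andP [_ //]]; rewrite ltNge; apply/negP => le_ratio; nra.
have def_ai : tstar_defined p w a i by rewrite tstar_definedE gt_eqF.
have cross u' := iphi_cross u' (iphi_tstar def_ai).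
split=> //; apply/andP; split; last first.
  by have := iphi_le_of_prec prec_u; have := cross u; nra.
rewrite lt_def; apply/andP; split; last by have := cross t0; nra.
(* A crossing at [t0] itself is ruled out by the tie-break in the choice of [a]. *)
apply/eqP => T_t0; have := cross te; have := cross t0; rewrite T_t0 subrr mulr0.
move=> /eqP; rewrite subr_eq0 => /eqP/esym/(alpha_tie_break iJ); nra.
Qed.

Hypothesis q_lt : (q < size cs)%N.

Lemma cpt_index x : x \in cs -> c (index x cs).+1 = x.
Proof. exact: nth_index. Qed.

Lemma Jleft_crossing j : c q <= s -> j \in Jl ->
  [/\ ratio j < ratio a, iphi a (tstar p w a j) = iphi j (tstar p w a j)
    & tstar p w a j + p j <= s].
Proof.
move=> cq_le; rewrite inE => /andP [jJ /andP [ja]]; rewrite /Mfun (negbTE ja).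
case: ifP => [/andP [/andP [def_aj /andP [t0_T _]] T_cs] M_le|_ M_le]; last first.
  by have := size_cpoints alpha.1; lia.
have cross := iphi_tstar def_aj.
split=> //; last first.
  by rewrite -(cpt_index T_cs) (le_trans _ cq_le) // cpt_le // M_le ltnW.
have := iphi_cross t0 cross; have := alpha_iphi_le jJ.
by rewrite lt_def -tstar_definedE def_aj /=; nra.
Qed.

Lemma Jright_not_prec i : s < c q.+1 -> te <= Ttot p -> ~ banned p w a s ->
  i \in Jr -> ~~ prec i a s.
Proof.
move=> s_lt te_le not_banned; rewrite inE => /andP [iJ M_gt]; apply/negP => prec_s.
have s_te : s < te by apply: lt_le_trans s_lt (cpoints_le_tend (mem_nth 0 q_lt)).
have t0_s : t0 <= s by rewrite lerDl sumr_ge0.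
have [lt_ratio def_ai /andP [t0_T T_s]] := prec_alpha_crossing iJ t0_s s_te prec_s.
have ia : i != a by apply: contraTneq lt_ratio => ->; rewrite ltxx.
(* [q < M i] puts [t*_{a i} + p_i] beyond [s], so that [s] is in [B_a]. *)
have s_lt_T : s < tstar p w a i + p i.
  move: M_gt; rewrite /Mfun (negbTE ia) def_ai t0_T (le_lt_trans T_s s_te) /=.
  case: ifP => [T_cs|T_cs _].
    rewrite ltnS => q_lt_M; apply: lt_le_trans s_lt _.
    by rewrite -(cpt_index T_cs) cpt_le // ltnS q_lt_M index_mem.
  rewrite ltNge; apply: contraFN T_cs => T_s'; apply: mem_cpoints => //.
  by have := p_gt0 i => pi; apply/andP; split; lra.
apply: not_banned; exists i; split=> //; split.
  rewrite ltr_phi //; have := iphi_cross 0 (iphi_tstar def_ai).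
  have : 0 < (ratio a - ratio i) * tstar p w a i.
    by rewrite mulr_gt0 ?subr_gt0 ?(le_lt_trans t0_ge0 t0_T).
  lra.
split=> //; split; apply/andP; split; [exact: le_lt_trans t0_ge0 t0_T|lra..].
Qed.

End Subproblem.

End Priority.

Theorem lemma8 (J : finType) (R : realFieldType) (p w : J -> R)
    (J' : {set J}) (t0 : R) (a : J) (q : nat) :
  (forall j, 0 < p j) -> (forall j, 0 < w j) ->
  J' != set0 ->
  0 <= t0 -> t0 <= Ttot p - \sum_(j in J') p j ->
  is_alpha p w J' t0 a ->
  (1 <= q)%N -> (q < size (cpoints p w J' t0 a))%N ->
  let s := t0 + \sum_(j in Jleft p w J' t0 a q) p j in
  cpt p w J' t0 a q <= s -> s < cpt p w J' t0 a q.+1 ->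
  ~ banned p w a s ->
  exists sch : seq J,
    partial_potential p w J' t0 sch /\
    (forall j, j \in Jleft p w J' t0 a q -> (index j sch < index a sch)%N) /\
    start p t0 sch a = s /\
    (forall j, j \in Jright p w J' t0 a q -> (index a sch < index j sch)%N).
Proof.
move=> p_gt0 w_gt0 _ t0_ge0 t0_le alpha q_gt0 q_lt s cq_le s_lt not_banned.
have te_le : tend p J' t0 <= Ttot p by rewrite /tend; lra.
have [J'E a_LR disj_LR] := Jleft_Jright_partition p w t0 q_gt0 alpha.1.
apply: (exists_block_schedule p_gt0 w_gt0 J'E a_LR disj_LR) => // [j jL | i iR].
  by exists (tstar p w a j); apply: Jleft_crossing.
split; last exact: Jright_not_prec.
have /setIdP [iJ _] := iR; exact: (alpha_iphi_le p_gt0 w_gt0 t0_ge0 alpha iJ).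
Qed.
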